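(* In the projective model structure on $\mathbf{Gpd}^{\mathbf{G}}$, trivial cofibrations are stable under pullback along any fibration: if $g:A\to B$ is a projective fibration and $f:C\to B$ is a projective trivial cofibration, then the pullback $g^*f: A\times_B C\to A$ is a projective trivial cofibration.
   Context: $\mathbf{Gpd}^{\mathbf{G}}$ is the category of groupoids equipped with an involution and functors commuting with the involutions (the functor category $[\mathbf{B}(\mathbb{Z}/2\mathbb{Z})^{op},\mathbf{Gpd}]$). Its projective model structure: weak equivalences are the morphisms whose underlying functor is an equivalence of groupoids, fibrations are the morphisms whose underlying functor is an isofibration of groupoids, cofibrations are the morphisms with the left lifting property with respect to trivial fibrations. A trivial cofibration is a cofibration that is a weak equivalence. *)

(* Groupoids presented "internally": a type of objects, a type
   of all morphisms with source/target maps, identities, composition (only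
   constrained on composable pairs) and inverses. *)

Record Gpd := {
  ob : Type;
  mor : Type;
  src : mor -> ob;
  tgt : mor -> ob;
  idm : ob -> mor;
  comp : mor -> mor -> mor;   (* comp g f = g o f, meaningful when tgt f = src g *)
  inv : mor -> mor;
  src_idm : forall x, src (idm x) = x;
  tgt_idm : forall x, tgt (idm x) = x;
  src_comp : forall g f, tgt f = src g -> src (comp g f) = src f;
  tgt_comp : forall g f, tgt f = src g -> tgt (comp g f) = tgt g;
  comp_idl : forall f, comp (idm (tgt f)) f = f;
  comp_idr : forall f, comp f (idm (src f)) = f;
  comp_assoc : forall h g f, tgt f = src g -> tgt g = src h ->
      comp h (comp g f) = comp (comp h g) f;
  src_inv : forall f, src (inv f) = tgt f;
  tgt_inv : forall f, tgt (inv f) = src f;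
  inv_l : forall f, comp (inv f) f = idm (src f);
  inv_r : forall f, comp f (inv f) = idm (tgt f)
}.

Arguments src {g0} _.
Arguments tgt {g0} _.
Arguments idm {g0} _.
Arguments comp {g0} _ _.
Arguments inv {g0} _.

Record Functor (X Y : Gpd) := {
  fob : ob X -> ob Y;
  fmor : mor X -> mor Y;
  fsrc : forall f, src (fmor f) = fob (src f);
  ftgt : forall f, tgt (fmor f) = fob (tgt f);
  fidm : forall x, fmor (idm x) = idm (fob x);
  fcomp : forall g f, tgt f = src g -> fmor (comp g f) = comp (fmor g) (fmor f)
}.

Arguments fob {X Y} _ _.
Arguments fmor {X Y} _ _.

(* Equivalence of groupoids: a functor with a quasi-inverse and natural
   isomorphisms G F ~= id and F G ~= id (every morphism of a groupoid is iso). *)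
Definition is_equivalence {X Y : Gpd} (F : Functor X Y) : Prop :=
  exists (G : Functor Y X) (eta : ob X -> mor X) (eps : ob Y -> mor Y),
    (forall x, src (eta x) = x /\ tgt (eta x) = fob G (fob F x)) /\
    (forall f, comp (eta (tgt f)) f = comp (fmor G (fmor F f)) (eta (src f))) /\
    (forall y, src (eps y) = fob F (fob G y) /\ tgt (eps y) = y) /\
    (forall f, comp (eps (tgt f)) (fmor F (fmor G f)) = comp f (eps (src f))).

Definition is_isofibration {X Y : Gpd} (F : Functor X Y) : Prop :=
  forall (x : ob X) (m : mor Y), src m = fob F x ->
    exists m' : mor X, src m' = x /\ fmor F m' = m.

(* Objects of Gpd^G: groupoids with a strict involution, i.e. functors
   B(Z/2)^op -> Gpd. *)
Record GGpd := {
  carrier :> Gpd;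
  sigma : Functor carrier carrier;
  sigma_invol_ob : forall x, fob sigma (fob sigma x) = x;
  sigma_invol_mor : forall f, fmor sigma (fmor sigma f) = f
}.

Record GHom (X Y : GGpd) := {
  gfun :> Functor X Y;
  gcomm_ob : forall x, fob gfun (fob (sigma X) x) = fob (sigma Y) (fob gfun x);
  gcomm_mor : forall f, fmor gfun (fmor (sigma X) f) = fmor (sigma Y) (fmor gfun f)
}.

Arguments gfun {X Y} _.

Definition square_commutes {A B X Y : GGpd}
  (i : GHom A B) (u : GHom A X) (p : GHom X Y) (v : GHom B Y) : Prop :=
  (forall a, fob p (fob u a) = fob v (fob i a)) /\
  (forall f, fmor p (fmor u f) = fmor v (fmor i f)).

Definition ghom_eq {X Y : GGpd} (F G : GHom X Y) : Prop :=
  (forall x, fob F x = fob G x) /\ (forall f, fmor F f = fmor G f).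

Definition comp_eq {A B X : GGpd} (h : GHom B X) (i : GHom A B) (u : GHom A X) : Prop :=
  (forall a, fob h (fob i a) = fob u a) /\ (forall f, fmor h (fmor i f) = fmor u f).

Definition weq {X Y : GGpd} (F : GHom X Y) : Prop := is_equivalence (gfun F).
Definition fibration {X Y : GGpd} (F : GHom X Y) : Prop := is_isofibration (gfun F).
Definition trivial_fibration {X Y : GGpd} (F : GHom X Y) : Prop :=
  fibration F /\ weq F.

Definition cofibration {A B : GGpd} (i : GHom A B) : Prop :=
  forall (X Y : GGpd) (p : GHom X Y), trivial_fibration p ->
  forall (u : GHom A X) (v : GHom B Y), square_commutes i u p v ->
  exists h : GHom B X, comp_eq h i u /\ comp_eq p h v.

Definition trivial_cofibration {A B : GGpd} (i : GHom A B) : Prop :=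
  cofibration i /\ weq i.

Definition is_pullback {A B C P : GGpd} (g : GHom A B) (f : GHom C B)
  (p1 : GHom P A) (p2 : GHom P C) : Prop :=
  square_commutes p1 p2 f g /\
  forall (X : GGpd) (q1 : GHom X A) (q2 : GHom X C),
    square_commutes q1 q2 f g ->
    exists h : GHom X P, comp_eq p1 h q1 /\ comp_eq p2 h q2 /\
      forall h' : GHom X P, comp_eq p1 h' q1 -> comp_eq p2 h' q2 -> ghom_eq h' h.

From Stdlib Require Import ClassicalEpsilon ProofIrrelevance.

(* The projective cofibrations of Gpd^G are exactly the equivariant functors that are
   injective on objects and whose image has a complement on which the involution acts
   freely: lifting against the trivial fibration that doubles every object of the target
   forces the latter, and conversely such a functor lifts against any fully faithful,
   surjective-on-objects functor by choosing lifts on one point of each free orbit.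
   Since the explicit pullback has pairs (a, c) as objects, this property passes to
   pullbacks. The weak equivalences are the fully faithful, essentially surjective
   functors, and the pullback of such a functor along an isofibration is again one: an
   object a is reached by lifting, along g, an isomorphism g a ~ f c. Finally an abstract
   pullback is a retract of the explicit one over A, and both classes are closed under
   such retracts. *)

Lemma fmor_src {X Y : Gpd} (F : Functor X Y) m : src (fmor F m) = fob F (src m).
Proof. apply fsrc. Qed.
Lemma fmor_tgt {X Y : Gpd} (F : Functor X Y) m : tgt (fmor F m) = fob F (tgt m).
Proof. apply ftgt. Qed.
Lemma fmor_idm {X Y : Gpd} (F : Functor X Y) x : fmor F (idm x) = idm (fob F x).
Proof. apply fidm. Qed.
Lemma fmor_comp {X Y : Gpd} (F : Functor X Y) m2 m1 :
  tgt m1 = src m2 -> fmor F (comp m2 m1) = comp (fmor F m2) (fmor F m1).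
Proof. apply fcomp. Qed.

Ltac endpoints := repeat first
  [ rewrite src_idm | rewrite tgt_idm | rewrite src_inv | rewrite tgt_inv
  | rewrite fmor_src | rewrite fmor_tgt
  | rewrite src_comp by endpoints_eq | rewrite tgt_comp by endpoints_eq ]
with endpoints_eq := endpoints; first [reflexivity | assumption | congruence].

Section GroupoidAlgebra.
Variable X : Gpd.
Implicit Types m n : mor X.

Lemma comp_idl_eq x m : tgt m = x -> comp (idm x) m = m.
Proof. intros <-. apply comp_idl. Qed.

Lemma comp_invKl m n : tgt n = src m -> comp (inv m) (comp m n) = n.
Proof.
  intros H. rewrite comp_assoc by endpoints_eq. rewrite inv_l, <- H. apply comp_idl.
Qed.

Lemma comp_Kinvl m n : tgt n = tgt m -> comp m (comp (inv m) n) = n.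
Proof.
  intros H. rewrite comp_assoc by endpoints_eq. rewrite inv_r, <- H. apply comp_idl.
Qed.

Lemma comp_Kinvr m n : tgt m = src n -> comp (comp n m) (inv m) = n.
Proof.
  intros H. rewrite <- comp_assoc by endpoints_eq. rewrite inv_r, H. apply comp_idr.
Qed.

Lemma inv_unique m n : tgt m = src n -> comp n m = idm (src m) -> n = inv m.
Proof.
  intros H1 H2. rewrite <- (comp_Kinvr m n) by exact H1. rewrite H2, <- (tgt_inv _ m).
  apply comp_idl.
Qed.
End GroupoidAlgebra.

Lemma fmor_inv {X Y : Gpd} (F : Functor X Y) m : fmor F (inv m) = inv (fmor F m).
Proof.
  apply inv_unique; endpoints; [reflexivity|].
  rewrite <- fmor_comp by endpoints_eq. rewrite inv_l, fmor_idm. endpoints. reflexivity.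
Qed.

Definition faithful {X Y : Gpd} (F : Functor X Y) : Prop :=
  forall m1 m2, src m1 = src m2 -> tgt m1 = tgt m2 -> fmor F m1 = fmor F m2 -> m1 = m2.

Definition full {X Y : Gpd} (F : Functor X Y) : Prop :=
  forall x x' (n : mor Y), src n = fob F x -> tgt n = fob F x' ->
    exists m, src m = x /\ tgt m = x' /\ fmor F m = n.

Definition ess_surj {X Y : Gpd} (F : Functor X Y) : Prop :=
  forall y, exists x (n : mor Y), src n = fob F x /\ tgt n = y.

Section EquivalenceFullyFaithful.
Variables (X Y : Gpd) (F : Functor X Y) (G : Functor Y X).
Variables (eta : ob X -> mor X) (eps : ob Y -> mor Y).
Hypothesis eta_endpoints : forall x, src (eta x) = x /\ tgt (eta x) = fob G (fob F x).
Hypothesis eta_natural : forall m, comp (eta (tgt m)) m = comp (fmor G (fmor F m)) (eta (src m)).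
Hypothesis eps_endpoints : forall y, src (eps y) = fob F (fob G y) /\ tgt (eps y) = y.
Hypothesis eps_natural : forall n, comp (eps (tgt n)) (fmor F (fmor G n)) = comp n (eps (src n)).

Lemma unit_faithful : faithful F.
Proof.
  intros m1 m2 Hs Ht HF.
  rewrite <- (comp_invKl _ (eta (tgt m1)) m1) by (symmetry; apply (proj1 (eta_endpoints _))).
  rewrite <- (comp_invKl _ (eta (tgt m2)) m2) by (symmetry; apply (proj1 (eta_endpoints _))).
  rewrite !eta_natural, HF, Hs, Ht. reflexivity.
Qed.

Lemma counit_faithful : faithful G.
Proof.
  intros n1 n2 Hs Ht HG.
  rewrite <- (comp_Kinvr _ (eps (src n1)) n1) by (apply (proj2 (eps_endpoints _))).
  rewrite <- (comp_Kinvr _ (eps (src n2)) n2) by (apply (proj2 (eps_endpoints _))).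
  rewrite <- !eps_natural, HG, Hs, Ht. reflexivity.
Qed.

Lemma unit_counit_full : full F.
Proof.
  intros x x' n Hs Ht.
  destruct (eta_endpoints x) as [Sx Tx], (eta_endpoints x') as [Sx' Tx'].
  set (m := comp (inv (eta x')) (comp (fmor G n) (eta x))).
  assert (Sm : src m = x) by (unfold m; endpoints_eq).
  assert (Tm : tgt m = x') by (unfold m; endpoints_eq).
  exists m. split; [exact Sm|split; [exact Tm|]].
  apply counit_faithful; endpoints; try congruence.
  pose proof (eta_natural m) as N. rewrite Sm, Tm in N.
  unfold m at 1 in N. rewrite comp_Kinvl in N by endpoints_eq.
  apply (f_equal (fun k => comp k (inv (eta x)))) in N.
  rewrite !comp_Kinvr in N by endpoints_eq. symmetry. exact N.
Qed.
End EquivalenceFullyFaithful.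

Lemma equivalence_full_faithful_ess_surj {X Y : Gpd} (F : Functor X Y) :
  is_equivalence F -> full F /\ faithful F /\ ess_surj F.
Proof.
  intros (G & eta & eps & Heta & Hetan & Heps & Hepsn).
  split; [|split].
  - exact (unit_counit_full _ _ F G eta eps Heta Hetan Heps Hepsn).
  - exact (unit_faithful _ _ F G eta Heta Hetan).
  - intros y. exists (fob G y), (eps y). apply Heps.
Qed.

Section QuasiInverse.
Variables (X Y : Gpd) (F : Functor X Y).
Hypotheses (F_full : full F) (F_faithful : faithful F).
Variables (G0 : ob Y -> ob X) (e : ob Y -> mor Y).
Hypotheses (e_src : forall y, src (e y) = fob F (G0 y)) (e_tgt : forall y, tgt (e y) = y).

Local Ltac ends := endpoints; rewrite ?e_src, ?e_tgt; endpoints; congruence.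

Definition conj_by (n : mor Y) : mor Y := comp (inv (e (tgt n))) (comp n (e (src n))).

Lemma conj_by_idm y : conj_by (idm y) = idm (fob F (G0 y)).
Proof.
  unfold conj_by. endpoints. rewrite comp_idl_eq, inv_l, e_src by apply e_tgt. reflexivity.
Qed.

Lemma conj_by_comp n2 n1 :
  tgt n1 = src n2 -> conj_by (comp n2 n1) = comp (conj_by n2) (conj_by n1).
Proof.
  intros H. unfold conj_by. endpoints. rewrite H.
  rewrite <- (comp_assoc _ (inv (e (tgt n2)))) by ends.
  rewrite <- (comp_assoc _ n2 (e (src n2))) by ends.
  rewrite comp_Kinvl by ends.
  rewrite <- (comp_assoc _ n2 n1) by ends. reflexivity.
Qed.

Lemma quasi_inverse_functor :
  exists G : Functor Y X, (forall y, fob G y = G0 y) /\ (forall n, fmor F (fmor G n) = conj_by n).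
Proof.
  destruct (choice (fun n m => src m = G0 (src n) /\ tgt m = G0 (tgt n) /\ fmor F m = conj_by n))
    as [G1 HG1].
  { intros n. apply F_full; unfold conj_by; ends. }
  assert (G1_src : forall n, src (G1 n) = G0 (src n)) by apply HG1.
  assert (G1_tgt : forall n, tgt (G1 n) = G0 (tgt n)) by apply HG1.
  assert (G1_F : forall n, fmor F (G1 n) = conj_by n) by apply HG1.
  unshelve eexists (Build_Functor Y X G0 G1 G1_src G1_tgt _ _);
    [| | split; [intros; reflexivity | exact G1_F]].
  - intros y. apply F_faithful; rewrite ?G1_src, ?G1_tgt; endpoints; auto.
    rewrite G1_F, fmor_idm, conj_by_idm. reflexivity.
  - intros n2 n1 H. apply F_faithful; rewrite ?G1_src, ?G1_tgt; endpoints;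
      rewrite ?G1_src, ?G1_tgt; try congruence.
    rewrite fmor_comp by (rewrite G1_src, G1_tgt; congruence).
    rewrite !G1_F. apply conj_by_comp, H.
Qed.
Lemma quasi_inverse_equivalence : is_equivalence F.
Proof.
  destruct quasi_inverse_functor as (G & G_ob & G_mor).
  destruct (choice (fun x m => src m = x /\ tgt m = G0 (fob F x) /\ fmor F m = inv (e (fob F x))))
    as [eta Heta].
  { intros x. apply F_full; endpoints; auto. }
  exists G, eta, e. split; [|split; [|split]].
  - intros x. rewrite G_ob. split; apply Heta.
  - intros m. destruct (Heta (src m)) as (Ss & Ts & Fs), (Heta (tgt m)) as (St & Tt & Ft).
    apply F_faithful; endpoints; rewrite ?G_ob; try congruence.
    rewrite !fmor_comp by (endpoints; rewrite ?G_ob; congruence).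
    rewrite G_mor, Fs, Ft. unfold conj_by. endpoints.
    rewrite <- comp_assoc by ends. rewrite comp_Kinvr by ends. reflexivity.
  - intros y. rewrite G_ob. split; auto.
  - intros n. rewrite G_mor. unfold conj_by. rewrite comp_Kinvl by ends. reflexivity.
Qed.
End QuasiInverse.

Lemma full_faithful_ess_surj_equivalence {X Y : Gpd} (F : Functor X Y) :
  full F -> faithful F -> ess_surj F -> is_equivalence F.
Proof.
  intros F_full F_faithful F_ess_surj.
  destruct (choice (fun y (xn : ob X * mor Y) => src (snd xn) = fob F (fst xn) /\ tgt (snd xn) = y))
    as [rep Hrep].
  { intros y. destruct (F_ess_surj y) as (x & n & Hn). exists (x, n). exact Hn. }
  apply (quasi_inverse_equivalence X Y F F_full F_faithful
           (fun y => fst (rep y)) (fun y => snd (rep y))); apply Hrep.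
Qed.

Ltac split_pairs := repeat match goal with
  | p : (_ * _)%type |- _ => destruct p
  | H : (_, _) = (_, _) |- _ => injection H as ? ?
  end; simpl in *.

Definition prod_gpd (X Y : Gpd) : Gpd.
Proof.
  refine (Build_Gpd (ob X * ob Y) (mor X * mor Y)
    (fun m => (src (fst m), src (snd m))) (fun m => (tgt (fst m), tgt (snd m)))
    (fun x => (idm (fst x), idm (snd x))) (fun n m => (comp (fst n) (fst m), comp (snd n) (snd m)))
    (fun m => (inv (fst m), inv (snd m))) _ _ _ _ _ _ _ _ _ _ _);
  intros; split_pairs; f_equal;
  auto using src_idm, tgt_idm, src_comp, tgt_comp, comp_idl, comp_idr, comp_assoc,
    src_inv, tgt_inv, inv_l, inv_r.
Defined.

Definition codisc_gpd (O : Type) : Gpd.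
Proof.
  refine (Build_Gpd O (O * O) fst snd (fun x => (x, x)) (fun n m => (fst m, snd n))
    (fun m => (snd m, fst m)) _ _ _ _ _ _ _ _ _ _ _);
  intros; split_pairs; reflexivity.
Defined.

Lemma sig_val_inj {T : Type} {P : T -> Prop} (a b : sig P) :
  proj1_sig a = proj1_sig b -> a = b.
Proof. destruct a, b; simpl. apply subset_eq_compat. Qed.

Record SubGpd (X : Gpd) := {
  in_ob : ob X -> Prop;
  in_mor : mor X -> Prop;
  in_src : forall m, in_mor m -> in_ob (src m);
  in_tgt : forall m, in_mor m -> in_ob (tgt m);
  in_idm : forall x, in_ob x -> in_mor (idm x);
  in_comp : forall n m, tgt m = src n -> in_mor n -> in_mor m -> in_mor (comp n m);
  in_inv : forall m, in_mor m -> in_mor (inv m)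
}.

Arguments in_ob {X} _ _.
Arguments in_mor {X} _ _.

Section Subgroupoid.
Variables (X : Gpd) (S : SubGpd X).

Definition sub_ob := {x : ob X | in_ob S x}.
Definition sub_mor := {m : mor X | in_mor S m}.

Definition sub_src (m : sub_mor) : sub_ob := exist _ _ (in_src X S _ (proj2_sig m)).
Definition sub_tgt (m : sub_mor) : sub_ob := exist _ _ (in_tgt X S _ (proj2_sig m)).
Definition sub_idm (x : sub_ob) : sub_mor := exist _ _ (in_idm X S _ (proj2_sig x)).
Definition sub_inv (m : sub_mor) : sub_mor := exist _ _ (in_inv X S _ (proj2_sig m)).

(* Composition of non-composable morphisms is junk; we return the right argument. *)
Definition sub_comp (n m : sub_mor) : sub_mor :=
  match excluded_middle_informative (tgt (proj1_sig m) = src (proj1_sig n)) with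
  | left H => exist _ _ (in_comp X S _ _ H (proj2_sig n) (proj2_sig m))
  | right _ => m
  end.

Lemma sub_comp_val n m : tgt (proj1_sig m) = src (proj1_sig n) ->
  proj1_sig (sub_comp n m) = comp (proj1_sig n) (proj1_sig m).
Proof.
  intros H. unfold sub_comp. destruct excluded_middle_informative; [reflexivity|contradiction].
Qed.

Lemma sub_composable (n m : sub_mor) :
  sub_tgt m = sub_src n -> tgt (proj1_sig m) = src (proj1_sig n).
Proof. intros H. exact (f_equal (@proj1_sig _ _) H). Qed.

Definition sub_gpd : Gpd.
Proof.
  refine (Build_Gpd sub_ob sub_mor sub_src sub_tgt sub_idm sub_comp sub_inv
    _ _ _ _ _ _ _ _ _ _ _);
  intros; repeat match goal with H : sub_tgt _ = sub_src _ |- _ => apply sub_composable in H end;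
  apply sig_val_inj; rewrite ?sub_comp_val; simpl; rewrite ?sub_comp_val; simpl;
  auto using src_idm, tgt_idm, src_comp, tgt_comp, comp_idl, comp_idr, comp_assoc,
    src_inv, tgt_inv, inv_l, inv_r.
  all: endpoints_eq.
Defined.
End Subgroupoid.

Definition id_functor (X : Gpd) : Functor X X :=
  Build_Functor X X (fun x => x) (fun m => m)
    (fun _ => eq_refl) (fun _ => eq_refl) (fun _ => eq_refl) (fun _ _ _ => eq_refl).

Definition comp_functor {X Y Z : Gpd} (G : Functor Y Z) (F : Functor X Y) : Functor X Z.
Proof.
  refine (Build_Functor X Z (fun x => fob G (fob F x)) (fun m => fmor G (fmor F m)) _ _ _ _);
    intros; endpoints; rewrite ?fmor_idm, ?fmor_comp by endpoints_eq;
    rewrite ?fmor_idm, ?fmor_comp; auto; endpoints_eq.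
Defined.

Definition fst_functor (X Y : Gpd) : Functor (prod_gpd X Y) X :=
  Build_Functor (prod_gpd X Y) X fst fst
    (fun _ => eq_refl) (fun _ => eq_refl) (fun _ => eq_refl) (fun _ _ _ => eq_refl).

Definition snd_functor (X Y : Gpd) : Functor (prod_gpd X Y) Y :=
  Build_Functor (prod_gpd X Y) Y snd snd
    (fun _ => eq_refl) (fun _ => eq_refl) (fun _ => eq_refl) (fun _ _ _ => eq_refl).

Definition pair_functor {Z X Y : Gpd} (F : Functor Z X) (G : Functor Z Y) :
  Functor Z (prod_gpd X Y).
Proof.
  refine (Build_Functor Z (prod_gpd X Y) (fun z => (fob F z, fob G z))
    (fun m => (fmor F m, fmor G m)) _ _ _ _); intros; simpl; f_equal;
    auto using fmor_src, fmor_tgt, fmor_idm.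
  all: apply fmor_comp; assumption.
Defined.

Definition codisc_functor {Z : Gpd} {O : Type} (h : ob Z -> O) : Functor Z (codisc_gpd O).
Proof.
  refine (Build_Functor Z (codisc_gpd O) h (fun m => (h (src m), h (tgt m))) _ _ _ _);
    intros; simpl; endpoints; reflexivity.
Defined.

Definition incl_functor {X : Gpd} (S : SubGpd X) : Functor (sub_gpd X S) X.
Proof.
  refine (Build_Functor (sub_gpd X S) X (@proj1_sig _ _) (@proj1_sig _ _) _ _ _ _);
    try reflexivity.
  intros n m H. apply sub_comp_val, sub_composable, H.
Defined.

Section Corestriction.
Variables (Z X : Gpd) (S : SubGpd X) (F : Functor Z X).
Hypotheses (F_ob : forall z, in_ob S (fob F z)) (F_mor : forall m, in_mor S (fmor F m)).

Definition corestrict : Functor Z (sub_gpd X S).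
Proof.
  refine (Build_Functor Z (sub_gpd X S) (fun z => exist _ _ (F_ob z)) (fun m => exist _ _ (F_mor m))
    _ _ _ _); intros; apply sig_val_inj; simpl; rewrite ?sub_comp_val; simpl;
    auto using fmor_src, fmor_tgt, fmor_idm, fmor_comp.
  endpoints_eq.
Defined.
End Corestriction.

Definition prod_ggpd (X Y : GGpd) : GGpd.
Proof.
  refine (Build_GGpd (prod_gpd X Y)
    (pair_functor (comp_functor (sigma X) (fst_functor X Y))
       (comp_functor (sigma Y) (snd_functor X Y)))
    _ _); intros []; simpl; rewrite ?sigma_invol_ob, ?sigma_invol_mor; reflexivity.
Defined.

Definition codisc_ggpd (O : Type) (s : O -> O) (s_invol : forall x, s (s x) = x) : GGpd.
Proof.
  refine (Build_GGpd (codisc_gpd O) (codisc_functor (Z := codisc_gpd O) s) _ _);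
    [intros x|intros []]; cbn; rewrite ?s_invol; reflexivity.
Defined.

Record GSubGpd (X : GGpd) := {
  gsub :> SubGpd X;
  in_ob_sigma : forall x, in_ob gsub x -> in_ob gsub (fob (sigma X) x);
  in_mor_sigma : forall m, in_mor gsub m -> in_mor gsub (fmor (sigma X) m)
}.

Definition sub_ggpd (X : GGpd) (S : GSubGpd X) : GGpd.
Proof.
  refine (Build_GGpd (sub_gpd X S)
    (corestrict _ _ S (comp_functor (sigma X) (incl_functor S))
      (fun x => in_ob_sigma X S _ (proj2_sig x)) (fun m => in_mor_sigma X S _ (proj2_sig m)))
    _ _); intros; apply sig_val_inj; simpl; rewrite ?sigma_invol_ob, ?sigma_invol_mor; reflexivity.
Defined.

Definition id_ghom (X : GGpd) : GHom X X :=
  Build_GHom X X (id_functor X) (fun _ => eq_refl) (fun _ => eq_refl).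

Definition comp_ghom {X Y Z : GGpd} (G : GHom Y Z) (F : GHom X Y) : GHom X Z.
Proof.
  refine (Build_GHom X Z (comp_functor G F) _ _); intros; simpl;
    rewrite ?gcomm_ob, ?gcomm_mor; reflexivity.
Defined.

Definition fst_ghom (X Y : GGpd) : GHom (prod_ggpd X Y) X :=
  Build_GHom (prod_ggpd X Y) X (fst_functor X Y) (fun _ => eq_refl) (fun _ => eq_refl).

Definition snd_ghom (X Y : GGpd) : GHom (prod_ggpd X Y) Y :=
  Build_GHom (prod_ggpd X Y) Y (snd_functor X Y) (fun _ => eq_refl) (fun _ => eq_refl).

Definition pair_ghom {Z X Y : GGpd} (F : GHom Z X) (G : GHom Z Y) : GHom Z (prod_ggpd X Y).
Proof.
  refine (Build_GHom Z (prod_ggpd X Y) (pair_functor F G) _ _); intros; simpl;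
    rewrite ?gcomm_ob, ?gcomm_mor; reflexivity.
Defined.

Definition codisc_ghom {Z : GGpd} {O : Type} (s : O -> O) (s_invol : forall x, s (s x) = x)
  (h : ob Z -> O) (h_sigma : forall z, h (fob (sigma Z) z) = s (h z)) :
  GHom Z (codisc_ggpd O s s_invol).
Proof.
  refine (Build_GHom Z (codisc_ggpd O s s_invol) (codisc_functor h) h_sigma _); intros; simpl;
    endpoints; rewrite !h_sigma; reflexivity.
Defined.

Definition incl_ghom {X : GGpd} (S : GSubGpd X) : GHom (sub_ggpd X S) X :=
  Build_GHom (sub_ggpd X S) X (incl_functor S) (fun _ => eq_refl) (fun _ => eq_refl).

Definition corestrict_ghom {Z X : GGpd} (S : GSubGpd X) (F : GHom Z X)
  (F_ob : forall z, in_ob S (fob F z)) (F_mor : forall m, in_mor S (fmor F m)) :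
  GHom Z (sub_ggpd X S).
Proof.
  refine (Build_GHom Z (sub_ggpd X S) (corestrict Z X S F F_ob F_mor) _ _); intros;
    apply sig_val_inj; simpl; rewrite ?gcomm_ob, ?gcomm_mor; reflexivity.
Defined.

Section Pullback.
Variables (A B C : GGpd) (g : GHom A B) (f : GHom C B).

Definition pullback_sub : GSubGpd (prod_ggpd A C).
Proof.
  unshelve refine (Build_GSubGpd _
    (Build_SubGpd (prod_ggpd A C) (fun w => fob f (snd w) = fob g (fst w))
       (fun m => fmor f (snd m) = fmor g (fst m)) _ _ _ _ _) _ _);
    intros; simpl in *.
  - rewrite <- !fmor_src. congruence.
  - rewrite <- !fmor_tgt. congruence.
  - rewrite !fmor_idm. congruence.
  - injection H as Hfst Hsnd. rewrite !fmor_comp by assumption. congruence.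
  - rewrite !fmor_inv. congruence.
  - rewrite !gcomm_ob. congruence.
  - rewrite !gcomm_mor. congruence.
Defined.

Definition pullback : GGpd := sub_ggpd _ pullback_sub.
Definition pullback_fst : GHom pullback A := comp_ghom (fst_ghom A C) (incl_ghom _).
Definition pullback_snd : GHom pullback C := comp_ghom (snd_ghom A C) (incl_ghom _).

Lemma pullback_square : square_commutes pullback_fst pullback_snd f g.
Proof. split; intros w; exact (proj2_sig w). Qed.
End Pullback.

Section PullbackEquivalence.
Variables (A B C : GGpd) (g : GHom A B) (f : GHom C B).

Lemma pullback_fst_faithful : faithful f -> faithful (pullback_fst A B C g f).
Proof.
  intros f_faithful [[a1 c1] H1] [[a2 c2] H2] Hs Ht Ha; simpl in *.
  apply (f_equal (@proj1_sig _ _)) in Hs, Ht; simpl in Hs, Ht.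
  injection Hs as Hsa Hsc. injection Ht as Hta Htc. subst a2.
  apply sig_val_inj; simpl. f_equal. apply f_faithful; congruence.
Qed.

Lemma pullback_fst_full : full f -> full (pullback_fst A B C g f).
Proof.
  intros f_full [[a c] Hw] [[a' c'] Hw'] n Hs Ht; simpl in *.
  destruct (f_full c c' (fmor g n)) as (m & Sm & Tm & Fm); endpoints; try congruence.
  exists (exist _ (n, m) Fm).
  split; [|split]; try reflexivity; apply sig_val_inj; simpl; congruence.
Qed.

Lemma pullback_fst_ess_surj :
  fibration g -> ess_surj f -> ess_surj (pullback_fst A B C g f).
Proof.
  intros g_fib f_ess_surj a.
  destruct (f_ess_surj (fob g a)) as (c & n & Sn & Tn).
  destruct (g_fib a (inv n)) as (m & Sm & Gm); [endpoints; exact Tn|].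
  assert (Hw : fob f c = fob g (tgt m)) by (rewrite <- fmor_tgt, Gm; endpoints; congruence).
  exists (exist _ (tgt m, c) Hw), (inv m). simpl. endpoints. split; [reflexivity|exact Sm].
Qed.

Lemma pullback_fst_weq : fibration g -> weq f -> weq (pullback_fst A B C g f).
Proof.
  intros g_fib f_weq.
  destruct (equivalence_full_faithful_ess_surj _ f_weq) as (f_full & f_faithful & f_ess_surj).
  apply full_faithful_ess_surj_equivalence.
  - exact (pullback_fst_full f_full).
  - exact (pullback_fst_faithful f_faithful).
  - exact (pullback_fst_ess_surj g_fib f_ess_surj).
Qed.
End PullbackEquivalence.

(* [side] picks one point in each σ-orbit off the image of i; such a choice exists
   exactly when σ has no fixed object there. *)
Definition relatively_free {A B : GGpd} (i : GHom A B) : Prop :=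
  (forall a a', fob i a = fob i a' -> a = a') /\
  exists side : ob B -> bool,
    forall b, (forall a, fob i a <> b) -> side (fob (sigma B) b) = negb (side b).

Lemma pullback_fst_relatively_free (A B C : GGpd) (g : GHom A B) (f : GHom C B) :
  relatively_free f -> relatively_free (pullback_fst A B C g f).
Proof.
  intros [f_inj [side Hside]]. split.
  - intros [[a c] H] [[a' c'] H'] Ha; simpl in *. subst a'.
    apply sig_val_inj; simpl. f_equal. apply f_inj. congruence.
  - exists (fun a => side (fob g a)). intros a Hoff.
    rewrite gcomm_ob. apply Hside. intros c Hc.
    exact (Hoff (exist _ (a, c) Hc) eq_refl).
Qed.

Section Induced.
Variables (B : GGpd) (O : Type) (s : O -> O) (s_invol : forall x, s (s x) = x).
Variables (pi : O -> ob B) (pi_sigma : forall x, pi (s x) = fob (sigma B) (pi x)).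

Definition induced_sub : GSubGpd (prod_ggpd (codisc_ggpd O s s_invol) B).
Proof.
  unshelve refine (Build_GSubGpd _
    (Build_SubGpd (prod_ggpd (codisc_ggpd O s s_invol) B) (fun w => pi (fst w) = snd w)
       (fun m => src (snd m) = pi (fst (fst m)) /\ tgt (snd m) = pi (snd (fst m))) _ _ _ _ _) _ _);
    simpl; intros.
  - symmetry; apply H.
  - symmetry; apply H.
  - endpoints. split; symmetry; exact H.
  - injection H as Hfst Hsnd. endpoints. split; [apply H1|apply H0].
  - endpoints. split; [apply H|apply H].
  - rewrite pi_sigma. congruence.
  - endpoints. rewrite !pi_sigma. split; f_equal; apply H.
Defined.

Definition induced : GGpd := sub_ggpd _ induced_sub.
Definition induced_proj : GHom induced B := comp_ghom (snd_ghom _ B) (incl_ghom _).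

Hypothesis pi_surj : forall b, exists x, pi x = b.

Lemma induced_proj_fibration : fibration induced_proj.
Proof.
  intros [[x b] Hw] m Hm; simpl in *.
  destruct (pi_surj (tgt m)) as [x' Hx'].
  exists (exist _ ((x, x'), m) (conj (eq_trans Hm (eq_sym Hw)) (eq_sym Hx'))).
  split; [apply sig_val_inj; simpl; congruence | reflexivity].
Qed.

Lemma induced_proj_weq : weq induced_proj.
Proof.
  apply full_faithful_ess_surj_equivalence.
  - intros [[x b] Hw] [[x' b'] Hw'] n Hs Ht; simpl in *.
    exists (exist _ ((x, x'), n) (conj (eq_trans Hs (eq_sym Hw)) (eq_trans Ht (eq_sym Hw')))).
    split; [|split]; try reflexivity; apply sig_val_inj; simpl; congruence.
  - intros [[[x y] m] H] [[[x' y'] m'] H'] Hs Ht Hm; simpl in *.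
    apply (f_equal (@proj1_sig _ _)) in Hs, Ht; simpl in Hs, Ht.
    apply sig_val_inj; simpl. congruence.
  - intros b. destruct (pi_surj b) as [x Hx].
    exists (exist _ (x, b) Hx), (idm b). simpl. endpoints. split; reflexivity.
Qed.

Lemma induced_proj_trivial_fibration : trivial_fibration induced_proj.
Proof. exact (conj induced_proj_fibration induced_proj_weq). Qed.
End Induced.

Section CofibrationIsRelativelyFree.
Variables (A B : GGpd) (i : GHom A B).

(* Objects of a trivial fibration over B: those of A, and two copies of those of B
   swapped by the involution, so that a lift B -> tagged sends every object off the
   image of i to a point of a free orbit. *)
Definition tagged_ob : Type := (ob A + ob B * bool)%type.

Definition tagged_sigma (x : tagged_ob) : tagged_ob :=
  match x with
  | inl a => inl (fob (sigma A) a)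
  | inr (b, t) => inr (fob (sigma B) b, negb t)
  end.

Definition tagged_proj (x : tagged_ob) : ob B :=
  match x with
  | inl a => fob i a
  | inr (b, _) => b
  end.

Lemma tagged_sigma_invol x : tagged_sigma (tagged_sigma x) = x.
Proof.
  destruct x as [a|[b t]]; simpl; rewrite sigma_invol_ob; [|rewrite Bool.negb_involutive];
    reflexivity.
Qed.

Lemma tagged_proj_sigma x : tagged_proj (tagged_sigma x) = fob (sigma B) (tagged_proj x).
Proof. destruct x as [a|[b t]]; [apply gcomm_ob|reflexivity]. Qed.

Lemma tagged_proj_surj b : exists x, tagged_proj x = b.
Proof. exists (inr (b, true)). reflexivity. Qed.

Definition tagged : GGpd :=
  induced B tagged_ob tagged_sigma tagged_sigma_invol tagged_proj tagged_proj_sigma.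

Definition tagged_incl : GHom A tagged.
Proof.
  refine (corestrict_ghom _
    (pair_ghom (codisc_ghom tagged_sigma tagged_sigma_invol inl (fun _ => eq_refl)) i) _ _);
    intros; simpl; [reflexivity|endpoints; split; reflexivity].
Defined.

Lemma cofibration_relatively_free : cofibration i -> relatively_free i.
Proof.
  intros i_cof.
  destruct (i_cof _ _ _
              (induced_proj_trivial_fibration _ _ _ _ _ tagged_proj_sigma tagged_proj_surj)
              tagged_incl (id_ghom B) (conj (fun _ => eq_refl) (fun _ => eq_refl)))
    as (h & [h_incl _] & [h_proj _]).
  set (E b := fst (proj1_sig (fob h b))).
  assert (E_incl : forall a, E (fob i a) = inl a)
    by (intros a; unfold E; rewrite h_incl; reflexivity).
  assert (E_proj : forall b, tagged_proj (E b) = b)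
    by (intros b; unfold E; rewrite <- (h_proj b) at 2; exact (proj2_sig (fob h b))).
  assert (E_sigma : forall b, E (fob (sigma B) b) = tagged_sigma (E b))
    by (intros b; unfold E; rewrite gcomm_ob; reflexivity).
  split.
  - intros a a' Ha. apply (f_equal E) in Ha. rewrite !E_incl in Ha. congruence.
  - exists (fun b => match E b with inr (_, t) => t | inl _ => true end).
    intros b Hoff. rewrite E_sigma.
    destruct (E b) as [a|[b' t]] eqn:Eb; [|reflexivity].
    exfalso. apply (Hoff a). rewrite <- (E_proj b), Eb. reflexivity.
Qed.
End CofibrationIsRelativelyFree.

Section LiftAlongFullyFaithful.
Variables (B X Y : GGpd) (p : GHom X Y) (v : GHom B Y).
Hypotheses (p_full : full p) (p_faithful : faithful p).
Variable hob : ob B -> ob X.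
Hypotheses (hob_p : forall b, fob p (hob b) = fob v b)
  (hob_sigma : forall b, hob (fob (sigma B) b) = fob (sigma X) (hob b)).

Lemma lift_along_full_faithful :
  exists h : GHom B X, (forall b, fob h b = hob b) /\ comp_eq p h v.
Proof.
  destruct (choice (fun n m => src m = hob (src n) /\ tgt m = hob (tgt n) /\ fmor p m = fmor v n))
    as [hm Hhm].
  { intros n. apply p_full; rewrite hob_p; endpoints; reflexivity. }
  assert (hm_src : forall n, src (hm n) = hob (src n)) by apply Hhm.
  assert (hm_tgt : forall n, tgt (hm n) = hob (tgt n)) by apply Hhm.
  assert (hm_p : forall n, fmor p (hm n) = fmor v n) by apply Hhm.
  unshelve eexists (Build_GHom B X (Build_Functor B X hob hm hm_src hm_tgt _ _) hob_sigma _).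
  - intros b. apply p_faithful; rewrite ?hm_src, ?hm_tgt; endpoints; auto.
    rewrite hm_p, !fmor_idm, hob_p. reflexivity.
  - intros n2 n1 H. apply p_faithful; rewrite ?hm_src, ?hm_tgt; endpoints;
      rewrite ?hm_src, ?hm_tgt; try congruence.
    rewrite !fmor_comp by (rewrite ?hm_src, ?hm_tgt; congruence).
    rewrite !hm_p, fmor_comp by exact H. reflexivity.
  - intros n. apply p_faithful; simpl; rewrite ?hm_src, ?hm_tgt; endpoints;
      rewrite ?hm_src, ?hm_tgt, ?hob_sigma; try reflexivity.
    rewrite hm_p, !gcomm_mor, hm_p. reflexivity.
  - split; [intros; reflexivity|]. split; [exact hob_p|exact hm_p].
Qed.
End LiftAlongFullyFaithful.

Lemma fibration_ess_surj_surjective {X Y : GGpd} (p : GHom X Y) :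
  fibration p -> ess_surj p -> forall y, exists x, fob p x = y.
Proof.
  intros p_fib p_ess y. destruct (p_ess y) as (x & n & Sn & Tn).
  destruct (p_fib x n Sn) as (m & _ & Pm).
  exists (tgt m). rewrite <- fmor_tgt, Pm. exact Tn.
Qed.

Section RelativelyFreeIsCofibration.
Variables (A B : GGpd) (i : GHom A B).
Hypothesis i_free : relatively_free i.

Lemma relatively_free_lift_ob (X Y : GGpd) (p : GHom X Y) (u : GHom A X) (v : GHom B Y) :
  (forall y, exists x, fob p x = y) -> (forall a, fob p (fob u a) = fob v (fob i a)) ->
  exists hob : ob B -> ob X, (forall a, hob (fob i a) = fob u a) /\
    (forall b, fob p (hob b) = fob v b) /\
    (forall b, hob (fob (sigma B) b) = fob (sigma X) (hob b)).
Proof.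
  destruct i_free as [i_inj [side Hside]]. intros p_surj sq.
  destruct (choice _ p_surj) as [sec Hsec].
  destruct (choice (fun b o => match o with
                               | Some a => fob i a = b
                               | None => forall a, fob i a <> b end)) as [pre Hpre].
  { intros b. destruct (excluded_middle_informative (exists a, fob i a = b)) as [[a Ha]|H].
    - exists (Some a). exact Ha.
    - exists None. intros a Ha. exact (H (ex_intro _ a Ha)). }
  (* On a free orbit {b, σ b} off the image, lift arbitrarily at the point where [side]
     is true and transport that lift by σ to the other point. *)
  set (hob b := match pre b with
                 | Some a => fob u a
                 | None => if side b then sec (fob v b)
                           else fob (sigma X) (sec (fob v (fob (sigma B) b)))
                 end).
  assert (hob_incl : forall a, hob (fob i a) = fob u a).
  { intros a. unfold hob. specialize (Hpre (fob i a)). destruct (pre (fob i a)) as [a'|].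
    - rewrite (i_inj _ _ Hpre). reflexivity.
    - contradiction (Hpre a eq_refl). }
  exists hob. split; [exact hob_incl|split].
  - intros b. unfold hob. specialize (Hpre b). destruct (pre b) as [a|].
    + subst b. apply sq.
    + destruct (side b); [apply Hsec|].
      rewrite gcomm_ob, Hsec, <- gcomm_ob, sigma_invol_ob. reflexivity.
  - intros b. pose proof (Hpre b) as Hb. destruct (pre b) as [a|] eqn:Eb.
    + subst b. rewrite <- gcomm_ob, !hob_incl. apply gcomm_ob.
    + assert (Hoff : forall a, fob i a <> fob (sigma B) b).
      { intros a Ha. apply (Hb (fob (sigma A) a)). rewrite gcomm_ob, Ha. apply sigma_invol_ob. }
      pose proof (Hpre (fob (sigma B) b)) as Hsb. unfold hob. rewrite Eb.
      destruct (pre (fob (sigma B) b)) as [a|]; [contradiction (Hoff a Hsb)|].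
      rewrite (Hside b Hb). destruct (side b); simpl; rewrite ?sigma_invol_ob; reflexivity.
Qed.

Lemma relatively_free_cofibration : cofibration i.
Proof.
  intros X Y p [p_fib p_weq] u v [sq_ob sq_mor].
  destruct (equivalence_full_faithful_ess_surj _ p_weq) as (p_full & p_faithful & p_ess).
  destruct (relatively_free_lift_ob X Y p u v (fibration_ess_surj_surjective p p_fib p_ess) sq_ob)
    as (hob & hob_incl & hob_p & hob_sigma).
  destruct (lift_along_full_faithful B X Y p v p_full p_faithful hob hob_p hob_sigma)
    as (h & h_ob & h_p).
  exists h. split; [split|exact h_p].
  - intros a. rewrite h_ob. apply hob_incl.
  - intros m. apply p_faithful; endpoints; rewrite ?h_ob, ?hob_incl; try reflexivity.
    rewrite (proj2 h_p), sq_mor. reflexivity.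
Qed.
End RelativelyFreeIsCofibration.

Section Retract.
Variables (P Q A : GGpd) (i : GHom P A) (i' : GHom Q A) (k : GHom P Q) (j : GHom Q P).
Hypotheses (i'_k : comp_eq i' k i) (i_j : comp_eq i j i') (j_k : comp_eq j k (id_ghom P)).

Lemma retract_cofibration : cofibration i' -> cofibration i.
Proof.
  intros i'_cof X Y p p_tf u v [sq_ob sq_mor].
  destruct (i'_cof X Y p p_tf (comp_ghom u j) v) as (h & [h_ob h_mor] & h_p).
  { split; intros; simpl; rewrite ?sq_ob, ?sq_mor, ?(proj1 i_j), ?(proj2 i_j); reflexivity. }
  exists h. split; [split|exact h_p].
  - intros x. rewrite <- (proj1 i'_k), h_ob. simpl. rewrite (proj1 j_k). reflexivity.
  - intros m. rewrite <- (proj2 i'_k), h_mor. simpl. rewrite (proj2 j_k). reflexivity.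
Qed.

Lemma retract_weq : weq i' -> weq i.
Proof.
  intros i'_weq.
  destruct (equivalence_full_faithful_ess_surj _ i'_weq) as (i'_full & i'_faithful & i'_ess).
  destruct i'_k as [ik_ob ik_mor], i_j as [ij_ob ij_mor], j_k as [jk_ob jk_mor].
  apply full_faithful_ess_surj_equivalence.
  - intros x x' n Hs Ht.
    destruct (i'_full (fob k x) (fob k x') n) as (m & Sm & Tm & Im); [congruence|congruence|].
    exists (fmor j m). endpoints. rewrite Sm, Tm, ij_mor, !jk_ob. auto.
  - intros m1 m2 Hs Ht Hi.
    pose proof (jk_mor m1) as E1. pose proof (jk_mor m2) as E2. simpl in E1, E2.
    rewrite <- E1, <- E2. f_equal.
    apply i'_faithful; endpoints; rewrite ?ik_mor; congruence.
  - intros y. destruct (i'_ess y) as (q & n & Sn & Tn).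
    exists (fob j q), n. rewrite ij_ob. auto.
Qed.
End Retract.

Lemma pullback_retract (A B C P : GGpd) (g : GHom A B) (f : GHom C B)
  (p1 : GHom P A) (p2 : GHom P C) :
  is_pullback g f p1 p2 ->
  exists (k : GHom P (pullback A B C g f)) (j : GHom (pullback A B C g f) P),
    comp_eq (pullback_fst A B C g f) k p1 /\ comp_eq p1 j (pullback_fst A B C g f) /\
    comp_eq j k (id_ghom P).
Proof.
  intros [[sq_ob sq_mor] universal].
  set (k := corestrict_ghom (pullback_sub A B C g f) (pair_ghom p1 p2) sq_ob sq_mor).
  destruct (universal _ _ _ (pullback_square A B C g f)) as (j & j_fst & j_snd & _).
  destruct (universal _ p1 p2 (conj sq_ob sq_mor)) as (h & _ & _ & h_unique).
  assert (jk_h : ghom_eq (comp_ghom j k) h).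
  { apply h_unique; split; intros; simpl; rewrite ?(proj1 j_fst), ?(proj2 j_fst),
      ?(proj1 j_snd), ?(proj2 j_snd); reflexivity. }
  assert (id_h : ghom_eq (id_ghom P) h) by (apply h_unique; split; intros; reflexivity).
  exists k, j. split; [|split; [exact j_fst|]].
  - split; intros; reflexivity.
  - destruct jk_h as [jk_ob jk_mor], id_h as [id_ob id_mor].
    split; intros; simpl in *; rewrite jk_ob || rewrite jk_mor; symmetry; auto.
Qed.

Theorem lemma4p8 (A B C P : GGpd) (g : GHom A B) (f : GHom C B)
  (p1 : GHom P A) (p2 : GHom P C) :
  fibration g -> trivial_cofibration f -> is_pullback g f p1 p2 ->
  trivial_cofibration p1.
Proof.
  intros g_fib [f_cof f_weq] p_pullback.
  destruct (pullback_retract A B C P g f p1 p2 p_pullback) as (k & j & fst_k & p1_j & j_k).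
  split.
  - apply (retract_cofibration _ _ _ p1 _ k j fst_k p1_j j_k).
    apply relatively_free_cofibration, pullback_fst_relatively_free, cofibration_relatively_free.
    exact f_cof.
  - apply (retract_weq _ _ _ p1 _ k j fst_k p1_j j_k).
    exact (pullback_fst_weq A B C g f g_fib f_weq).
Qed.
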